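(* Let $G$ be a finite abelian group, $R\subseteq \mathbb{Q}$ a subring, and $n\geq 1$ an integer. Let $S$ be the set of primes $\ell$ such that $\ell\mid \#G$ and $\ell^{-1}\notin R$. Then \[ Q_n(R,G)\cong \bigoplus_{\ell\in S}\mathrm{Syl}_{\ell}\big(Q_n(\mathbb{Z},G)\big) \] as $R$-modules, where the right-hand side is an $R$-module via the following structure on a finite abelian group $H$ all of whose prime divisors of $\#H$ are non-invertible in $R$: for $\frac{a}{b}\in R$ in lowest terms and $h\in H$, $\frac{a}{b}\cdot h := (h^{1/b})^a$, where $h^{1/b}$ is the unique element whose $b$-th power is $h$ (which exists since $\gcd(b,\#H)=1$).
   Context: For a ring $A$ and abelian group $G$, $A[G]$ is the group algebra, $[g]$ denotes $g$ viewed in $A[G]$, $I(A,G)$ is the kernel of the augmentation map $A[G]\to A$, $[g]\mapsto 1$, and $Q_n(A,G)=I(A,G)^n/I(A,G)^{n+1}$ (which for $A=\mathbb{Z}$ is a finite abelian group). For a finite abelian group $H$ and a prime $\ell$, $\mathrm{Syl}_\ell(H)$ is its $\ell$-Sylow subgroup, trivial if $\ell\nmid\#H$. *)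

From HB Require Import structures.
From mathcomp Require Import all_boot all_order all_algebra.
Set Implicit Arguments. Unset Strict Implicit. Unset Printing Implicit Defensive.
Import Order.TTheory GRing.Theory Num.Theory.
Local Open Scope ring_scope.

(* Group algebras A[G] for subrings A of Q are realised inside the ambient
   Q-vector space {ffun G -> rat}: an element sum_g a_g [g] is the function
   g |-> a_g, and [g] is the indicator function of g. *)
Section GroupAlgebra.
Variable G : finZmodType.
Local Notation V := {ffun G -> rat}.

Definition gbase (g : G) : V := [ffun x => (x == g)%:R].
Definition gmul (f h : V) : V := [ffun x => \sum_(y : G) f y * h (x - y)].
Definition gscale (r : rat) (f : V) : V := [ffun x => r * f x].
Definition in_galg (A : {pred rat}) (f : V) : Prop := forall g, f g \in A.
Definition augm (f : V) : rat := \sum_(g : G) f g.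
Definition in_aug (A : {pred rat}) (f : V) : Prop := in_galg A f /\ augm f = 0.

(* aug_pow A n f  <->  f \in I(A,G)^n  (with I^0 = A[G]);
   I^(n+1) = I^n * I is the additive subgroup generated by the products
   x * y with x \in I^n and y \in I. *)
Inductive aug_pow (A : {pred rat}) : nat -> V -> Prop :=
| aug_pow0 f : in_galg A f -> aug_pow A 0 f
| aug_pow_mul n x y : aug_pow A n x -> in_aug A y -> aug_pow A n.+1 (gmul x y)
| aug_pow_zero n : aug_pow A n.+1 0
| aug_pow_sub n x y : aug_pow A n.+1 x -> aug_pow A n.+1 y -> aug_pow A n.+1 (x - y).

Definition ZZ : {pred rat} := [pred x : rat | x \is a Num.int].

(* Q_n(A,G) = I(A,G)^n / I(A,G)^(n+1), presented as a subquotient: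
   elements are represented by x with aug_pow A n x, and two representatives
   are equal in Q_n(A,G) iff their difference lies in I^(n+1). *)
Definition Qn_eqv (A : {pred rat}) (n : nat) (x y : V) : Prop :=
  aug_pow A n.+1 (x - y).

(* Representatives of elements of Syl_l(Q_n(Z,G)): classes [x] in Q_n(Z,G)
   of l-power order, i.e. l^k [x] = 0 in Q_n(Z,G) for some k. *)
Definition Syl_rep (l n : nat) (x : V) : Prop :=
  aug_pow ZZ n x /\ exists k : nat, aug_pow ZZ n.+1 (x *+ (l ^ k)).

Definition Sprimes (R : {pred rat}) (l : nat) : bool :=
  [&& prime l, (l %| #|G|)%N & (l%:R)^-1 \notin R].

(* The R-module structure on Syl_l(Q_n(Z,G)) of the paper:
   for r = a/b in lowest terms (a = numq r, b = denq r > 0),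
   r . [h] = ([h]^(1/b))^a, where [h]^(1/b) = [z] is the element of the
   Sylow subgroup with b [z] = [h] (written additively).
   syl_act l n r h h'  <->  [h'] = r . [h]. *)
Definition syl_act (l n : nat) (r : rat) (h h' : V) : Prop :=
  exists z, [/\ Syl_rep l n z,
                Qn_eqv ZZ n (z *~ denq r) h &
                Qn_eqv ZZ n h' (z *~ numq r)].

(* The direct sum  (+)_{l \in S} Syl_l(Q_n(Z,G)) : an element is a family
   m : nat -> V whose l-th component (for l \in S) represents an element
   of Syl_l(Q_n(Z,G)); components outside S are irrelevant. *)
Definition DS_mem (R : {pred rat}) (n : nat) (m : nat -> V) : Prop :=
  forall l, Sprimes R l -> Syl_rep l n (m l).
Definition DS_eqv (R : {pred rat}) (n : nat) (m m' : nat -> V) : Prop :=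
  forall l, Sprimes R l -> Qn_eqv ZZ n (m l) (m' l).
Definition DS_add (m m' : nat -> V) : nat -> V := fun l => m l + m' l.
Definition DS_act (R : {pred rat}) (n : nat) (r : rat) (m m' : nat -> V) : Prop :=
  forall l, Sprimes R l -> syl_act l n r (m l) (m' l).

(* Q_n(R,G) is isomorphic, as an R-module, to the direct sum above:
   there is a map phi on representatives that is well defined and injective
   on classes, additive, R-linear and surjective. *)
Definition Qn_iso_DS (R : {pred rat}) (n : nat) : Prop :=
  exists phi : V -> (nat -> V),
  [/\ forall x, aug_pow R n x -> DS_mem R n (phi x),
      forall x y, aug_pow R n x -> aug_pow R n y ->
        (Qn_eqv R n x y <-> DS_eqv R n (phi x) (phi y)),
      forall x y, aug_pow R n x -> aug_pow R n y ->
        DS_eqv R n (phi (x + y)) (DS_add (phi x) (phi y)),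
      forall r x, r \in R -> aug_pow R n x ->
        DS_act R n r (phi x) (phi (gscale r x)) &
      forall m, DS_mem R n m -> exists2 x, aug_pow R n x & DS_eqv R n (phi x) m].

End GroupAlgebra.

From Stdlib Require Import ClassicalEpsilon.
From HB Require Import structures.
From mathcomp Require Import all_boot all_order all_algebra fingroup cyclic zify.
Set Implicit Arguments. Unset Strict Implicit. Unset Printing Implicit Defensive.
Import Order.TTheory GRing.Theory Num.Theory.
Local Open Scope ring_scope.

(* Q_n(Z,G) is a finite group killed by N = #G, because N ([g] - [0]) lies in I^2.
   Clearing denominators, x lies in I(R,G)^k iff d x lies in I(Z,G)^k for some d with
   1/d in R, so Q_n(R,G) is Q_n(Z,G) with the integers invertible in R inverted.  Such
   integers are prime to every l in S, while every prime divisor of N outside S is one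
   of them.  Hence Q_n(R,G) is the direct sum of its localizations at the l in S, and
   its localization at l is Syl_l(Q_n(Z,G)): the isomorphism sends x to the family of
   its l-components, computed from the factorization N = l^a b by Bezout. *)

Lemma ZZ_subring : GRing.subring_closed ZZ.
Proof. by split => [|x y|x y]; rewrite !inE ?rpred1 //; [exact: rpredB | exact: rpredM]. Qed.

HB.instance Definition _ := GRing.isSubringClosed.Build rat ZZ ZZ_subring.

Section GroupAlgebra.
Variable G : finZmodType.
Local Notation V := {ffun G -> rat}.
Local Notation N := #|G|.

Lemma gmulE (f h : V) x : gmul f h x = \sum_(y : G) f y * h (x - y).
Proof. by rewrite ffunE. Qed.

Lemma gmulC (f h : V) : gmul f h = gmul h f.
Proof.
apply/ffunP => x; rewrite !gmulE (reindex_inj (can_inj (subKr x))) /=.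
by apply: eq_bigr => y _; rewrite subKr mulrC.
Qed.

Lemma gmulA (f h k : V) : gmul (gmul f h) k = gmul f (gmul h k).
Proof.
apply/ffunP => x; rewrite !gmulE.
under eq_bigr do rewrite gmulE mulr_suml.
rewrite exchange_big /=; apply: eq_bigr => y _.
rewrite gmulE mulr_sumr (reindex_inj (addIr y)) /=.
apply: eq_bigr => z _; rewrite addrK mulrA; congr (_ * _ * k _).
by rewrite opprD addrA addrAC.
Qed.

Lemma gmulBl (f f' h : V) : gmul (f - f') h = gmul f h - gmul f' h.
Proof.
apply/ffunP => x; rewrite !ffunE -sumrB; apply: eq_bigr => y _.
by rewrite !ffunE mulrBl.
Qed.

Lemma gmulBr (f h h' : V) : gmul f (h - h') = gmul f h - gmul f h'.
Proof. by rewrite gmulC gmulBl !(gmulC f). Qed.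

Lemma gmul0l (h : V) : gmul 0 h = 0.
Proof. by rewrite -[in LHS](subrr (0 : V)) gmulBl subrr. Qed.

Lemma gmul0r (h : V) : gmul h 0 = 0.
Proof. by rewrite gmulC gmul0l. Qed.

Lemma gmul_scalel r (f h : V) : gmul (gscale r f) h = gscale r (gmul f h).
Proof.
apply/ffunP => x; rewrite !ffunE mulr_sumr; apply: eq_bigr => y _.
by rewrite !ffunE mulrA.
Qed.

Lemma gscale_nat k (f : V) : gscale k%:R f = f *+ k.
Proof. by apply/ffunP => x; rewrite !ffunE ffunMnE mulr_natl. Qed.

Lemma gscaleA r s (f : V) : gscale r (gscale s f) = gscale (r * s) f.
Proof. by apply/ffunP => x; rewrite !ffunE mulrA. Qed.

Lemma gscale1 (f : V) : gscale 1 f = f.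
Proof. by apply/ffunP => x; rewrite !ffunE mul1r. Qed.

Lemma gscale0 r : gscale r (0 : V) = 0.
Proof. by apply/ffunP => x; rewrite !ffunE mulr0. Qed.

Lemma gscaleB r (f h : V) : gscale r (f - h) = gscale r f - gscale r h.
Proof. by apply/ffunP => x; rewrite !ffunE mulrBr. Qed.

Lemma gscale_denq r (f : V) : gscale r f *+ `|denq r|%N = f *~ numq r.
Proof.
apply/ffunP => x; rewrite ffunMnE ffunMzE !ffunE -mulrzr numqE -mulr_natr.
by rewrite pmulrn gtz0_abs ?denq_gt0 // mulrCA mulrA.
Qed.

Lemma gmulMnl (f h : V) k : gmul (f *+ k) h = gmul f h *+ k.
Proof. by rewrite -!gscale_nat gmul_scalel. Qed.

Lemma gmulMnr (f h : V) k : gmul f (h *+ k) = gmul f h *+ k.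
Proof. by rewrite gmulC gmulMnl gmulC. Qed.

Lemma gbaseE (a x : G) : gbase a x = (x == a)%:R.
Proof. by rewrite ffunE. Qed.

Lemma gmul_gbase (a : G) (h : V) x : gmul (gbase a) h x = h (x - a).
Proof.
rewrite gmulE (bigD1 a) //= big1 => [|y /negPf ya]; last by rewrite gbaseE ya mul0r.
by rewrite gbaseE eqxx mul1r addr0.
Qed.

Lemma gbaseM (a b : G) : gmul (gbase a) (gbase b) = gbase (a + b).
Proof. by apply/ffunP => x; rewrite gmul_gbase !gbaseE subr_eq addrC. Qed.

Lemma gmul1l (h : V) : gmul (gbase 0) h = h.
Proof. by apply/ffunP => x; rewrite gmul_gbase subr0. Qed.

Lemma augm_gbase (g : G) : augm (gbase g) = 1.
Proof.
rewrite /augm (bigD1 g) //= big1 => [|x /negPf xg]; last by rewrite gbaseE xg.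
by rewrite gbaseE eqxx addr0.
Qed.

Lemma augmB (f h : V) : augm (f - h) = augm f - augm h.
Proof. by rewrite /augm -sumrB; apply: eq_bigr => x _; rewrite !ffunE. Qed.

Lemma augmMn (f : V) k : augm (f *+ k) = augm f *+ k.
Proof. by rewrite /augm -sumrMnl; apply: eq_bigr => g _; rewrite ffunMnE. Qed.

Definition aug_gen (g : G) : V := gbase g - gbase 0.

Lemma aug_genM (a g : G) :
  gmul (aug_gen a) (aug_gen g) = aug_gen (a + g) - aug_gen a - aug_gen g.
Proof.
rewrite /aug_gen gmulBl !gmulBr !gbaseM !addr0 !add0r.
by congr (_ - _); rewrite opprB addrA subrK.
Qed.

Lemma augm0_sum_aug_gen (y : V) : augm y = 0 -> y = \sum_(g : G) gscale (y g) (aug_gen g).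
Proof.
move=> y0; apply/ffunP => x; rewrite sum_ffunE.
under eq_bigr do rewrite !ffunE mulrBr.
rewrite sumrB (bigD1 x) //= big1 => [|g /negPf gx]; last by rewrite eq_sym gx mulr0.
by rewrite eqxx mulr1 addr0 -mulr_suml -/(augm y) y0 mul0r subr0.
Qed.

Lemma mulrn_card (g : G) : g *+ N = 0.
Proof.
have := expg_cardG (in_setT g); rewrite cardsT => /eqP.
by rewrite FinRing.zmodXgE => /eqP.
Qed.

Section AugmentationIdeal.
Variable A : subringClosed rat.

Lemma in_galg_gbase (g : G) : in_galg A (gbase g).
Proof. by move=> x; rewrite gbaseE rpred_nat. Qed.

Lemma in_galgB (f h : V) : in_galg A f -> in_galg A h -> in_galg A (f - h).
Proof. by move=> Af Ah x; rewrite !ffunE rpredB. Qed.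

Lemma in_galgM (f h : V) : in_galg A f -> in_galg A h -> in_galg A (gmul f h).
Proof. by move=> Af Ah x; rewrite gmulE rpred_sum // => y _; rewrite rpredM. Qed.

Lemma in_galg_scale r (f : V) : r \in A -> in_galg A f -> in_galg A (gscale r f).
Proof. by move=> Ar Af x; rewrite ffunE rpredM. Qed.

Lemma aug_pow_0 k : aug_pow A k (0 : V).
Proof.
by case: k => [|k]; [apply: aug_pow0 => x; rewrite ffunE rpred0 | exact: aug_pow_zero].
Qed.

Lemma aug_powB k (x y : V) : aug_pow A k x -> aug_pow A k y -> aug_pow A k (x - y).
Proof.
case: k => [|k] Ax Ay; last exact: aug_pow_sub.
by inversion Ax; inversion Ay; apply: aug_pow0; apply: in_galgB.
Qed.

Lemma aug_powN k (x : V) : aug_pow A k x -> aug_pow A k (- x).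
Proof. by move=> Ax; rewrite -sub0r; apply: aug_powB => //; apply: aug_pow_0. Qed.

Lemma aug_powD k (x y : V) : aug_pow A k x -> aug_pow A k y -> aug_pow A k (x + y).
Proof. by move=> Ax Ay; rewrite -[y]opprK; apply: aug_powB => //; apply: aug_powN. Qed.

Lemma aug_pow_sum k (I : Type) (r : seq I) (P : pred I) (F : I -> V) :
  (forall i, P i -> aug_pow A k (F i)) -> aug_pow A k (\sum_(i <- r | P i) F i).
Proof. by move=> AF; apply: big_ind => //; [apply: aug_pow_0 | apply: aug_powD]. Qed.

Lemma aug_powMn k (x : V) m : aug_pow A k x -> aug_pow A k (x *+ m).
Proof.
move=> Ax; elim: m => [|m IH]; first by rewrite mulr0n; apply: aug_pow_0.
by rewrite mulrS; apply: aug_powD.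
Qed.

Lemma aug_powMz k (x : V) (m : int) : aug_pow A k x -> aug_pow A k (x *~ m).
Proof.
by move=> Ax; case: m => m; rewrite ?NegzE ?mulrNz; [|apply: aug_powN]; apply: aug_powMn.
Qed.

Lemma aug_pow_scale k r (x : V) : r \in A -> aug_pow A k x -> aug_pow A k (gscale r x).
Proof.
move=> Ar; elim=> {k x} [f Af|k x y _ IHx Iy|k|k x y _ IHx _ IHy].
- by apply: aug_pow0; apply: in_galg_scale.
- by rewrite -gmul_scalel; apply: aug_pow_mul.
- by rewrite gscale0; apply: aug_pow_zero.
- by rewrite gscaleB; apply: aug_pow_sub.
Qed.

Lemma aug_pow_mulr k (a b : V) : aug_pow A k a -> in_galg A b -> aug_pow A k (gmul a b).
Proof.
move=> Aa Ab; elim: Aa => {k a} [f Af|k x y _ IHx Iy|k|k x y _ IHx _ IHy].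
- by apply: aug_pow0; apply: in_galgM.
- by rewrite gmulA (gmulC y) -gmulA; apply: aug_pow_mul.
- by rewrite gmul0l; apply: aug_pow_zero.
- by rewrite gmulBl; apply: aug_pow_sub.
Qed.

Lemma aug_pow_mul_add k m (a b : V) :
  aug_pow A k a -> aug_pow A m b -> aug_pow A (k + m) (gmul a b).
Proof.
move=> Aa Ab; elim: Ab => {m b} [f Af|m x y _ IHx Iy|m|m x y _ IHx _ IHy].
- by rewrite addn0; apply: aug_pow_mulr.
- by rewrite -gmulA addnS; apply: aug_pow_mul.
- by rewrite gmul0r addnS; apply: aug_pow_zero.
- by rewrite gmulBr addnS; apply: aug_pow_sub; rewrite -addnS.
Qed.

Lemma aug_pow1 (y : V) : in_aug A y -> aug_pow A 1 y.
Proof.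
by move=> Iy; rewrite -(gmul1l y); apply: aug_pow_mul => //; apply/aug_pow0/in_galg_gbase.
Qed.

Lemma aug_pow_gcdn k (v : V) a b : (0 < a)%N ->
  aug_pow A k (v *+ a) -> aug_pow A k (v *+ b) -> aug_pow A k (v *+ gcdn a b).
Proof.
move=> a_gt0 Aa Ab; case: (egcdnP b a_gt0) => u w Euw _.
have -> : v *+ gcdn a b = v *+ a *+ u - v *+ b *+ w.
  by rewrite -!mulrnA (mulnC a) (mulnC b) Euw mulrnDr addrAC subrr add0r.
by apply: aug_powB; apply: aug_powMn.
Qed.

Lemma in_aug_gen (g : G) : in_aug A (aug_gen g).
Proof.
by split; [apply: in_galgB; apply: in_galg_gbase | rewrite augmB !augm_gbase subrr].
Qed.

(* sum_(j < N) ([j g] - [0]) ([g] - [0]) = - N ([g] - [0]) telescopes, as N g = 0. *)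
Lemma aug_gen_card (g : G) : aug_pow A 2 (aug_gen g *+ N).
Proof.
have -> : aug_gen g *+ N = - \sum_(0 <= j < N) gmul (aug_gen (g *+ j)) (aug_gen g).
  under eq_bigr do rewrite aug_genM -mulrSr.
  rewrite sumrB telescope_sumr // mulrn_card mulr0n subrr sumr_const_nat subn0.
  by rewrite sub0r opprK.
apply/aug_powN/aug_pow_sum => j _.
by apply: aug_pow_mul; [apply: aug_pow1 |]; apply: in_aug_gen.
Qed.

Lemma in_aug_card (y : V) : in_aug A y -> aug_pow A 2 (y *+ N).
Proof.
case=> Ay /augm0_sum_aug_gen ->; rewrite -sumrMnl; apply: aug_pow_sum => g _.
rewrite -gscale_nat gscaleA mulrC -gscaleA gscale_nat.
by apply: aug_pow_scale => //; apply: aug_gen_card.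
Qed.

Lemma aug_pow_card k (x : V) : (0 < k)%N -> aug_pow A k x -> aug_pow A k.+1 (x *+ N).
Proof.
move=> + Ax; elim: Ax => {k x} [//|k x y Ax _ Iy _|k _|k x y _ IHx _ IHy _].
- by rewrite -gmulMnr -addn2; apply: aug_pow_mul_add => //; apply: in_aug_card.
- by rewrite mul0rn; apply: aug_pow_0.
- by rewrite mulrnBl; apply: aug_pow_sub; [apply: IHx | apply: IHy].
Qed.

End AugmentationIdeal.

Lemma card_zmod_gt0 : (0 < N)%N.
Proof. by apply/card_gt0P; exists 0. Qed.

Lemma aug_pow_subset (A B : {pred rat}) k (x : V) :
  {subset A <= B} -> aug_pow A k x -> aug_pow B k x.
Proof.
move=> AB; elim=> {k x} [f Af|k x y _ IHx [Ay y0]|k|k x y _ IHx _ IHy].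
- by apply: aug_pow0 => g; apply: AB.
- by apply: aug_pow_mul => //; split=> // g; apply: AB.
- exact: aug_pow_zero.
- exact: aug_pow_sub.
Qed.

Section SylowRepresentatives.
Variables l n : nat.

Lemma Syl_repMz (z : V) (m : int) : Syl_rep l n z -> Syl_rep l n (z *~ m).
Proof.
case=> Iz [k Ik]; split; first exact: aug_powMz.
by exists k; rewrite pmulrn mulrzAC -pmulrn; apply: aug_powMz.
Qed.

Lemma Syl_repB (z z' : V) : Syl_rep l n z -> Syl_rep l n z' -> Syl_rep l n (z - z').
Proof.
case=> Iz [k Ik] [Iz' [k' Ik']]; split; first exact: aug_powB.
exists (k + k')%N; rewrite expnD mulrnBl; apply: aug_powB.
  by rewrite mulrnA; apply: aug_powMn.
by rewrite mulnC mulrnA; apply: aug_powMn.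
Qed.

Lemma Syl_repD (z z' : V) : Syl_rep l n z -> Syl_rep l n z' -> Syl_rep l n (z + z').
Proof.
move=> Sz Sz'; have -> : z + z' = z - z' *~ -1 by rewrite mulrN1z opprK.
by apply: Syl_repB => //; apply: Syl_repMz.
Qed.

(* w is the element z^(1/b) of the paper: u z for an inverse u of b modulo l^k. *)
Lemma Syl_rep_divn (z : V) b : (0 < b)%N -> coprime b l -> Syl_rep l n z ->
  exists2 w, Syl_rep l n w & Qn_eqv ZZ n (w *+ b) z.
Proof.
move=> b_gt0 bl Sz; have [_ [k Ik]] := Sz.
have /eqP bl_k : coprime b (l ^ k) by apply: coprimeXr.
case: (egcdnP (l ^ k) b_gt0) => u w Euw _; rewrite bl_k in Euw.
exists (z *+ u); first by rewrite pmulrn; apply: Syl_repMz.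
rewrite /Qn_eqv -mulrnA Euw mulrnDr mulr1n addrK mulnC mulrnA.
exact: aug_powMn.
Qed.

End SylowRepresentatives.

Section Localization.
Variable R : {pred rat}.
Hypothesis subring_R : GRing.subring_closed R.
#[local] HB.instance Definition _ := GRing.isSubringClosed.Build rat R subring_R.

Lemma ZZ_subset : {subset ZZ <= R}.
Proof. by move=> x; rewrite inE => /numqK <-; apply: rpred_int. Qed.

Definition invertible (d : nat) : bool := (0 < d)%N && (d%:R^-1 \in R).

Lemma invertible1 : invertible 1.
Proof. by rewrite /invertible invr1 rpred1. Qed.

Lemma invertibleM a b : invertible a -> invertible b -> invertible (a * b).
Proof.
case/andP=> a_gt0 Ra /andP[b_gt0 Rb].
by rewrite /invertible muln_gt0 a_gt0 b_gt0 natrM invfM rpredM.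
Qed.

Lemma invertibleX a k : invertible a -> invertible (a ^ k).
Proof. by move=> Ia; elim: k => [|k IH]; rewrite ?invertible1 // expnS invertibleM. Qed.

Lemma invertible_denq r : r \in R -> invertible `|denq r|%N.
Proof.
move=> Rr; have den_neq0 : (denq r)%:~R != 0 :> rat by rewrite intr_eq0 denq_neq0.
rewrite /invertible absz_gt0 denq_neq0 pmulrn gtz0_abs ?denq_gt0 //=.
have [u [v /= Euv]] := Bezoutz (numq r) (denq r).
move: Euv; rewrite /gcdz (eqP (coprime_num_den r)).
move/(congr1 (fun z : int => z%:~R : rat)); rewrite rmorphD !rmorphM /= numqE => Euv.
have -> : (denq r)%:~R^-1 = u%:~R * r + v%:~R :> rat.
  by apply: (mulIf den_neq0); rewrite mulVf // mulrDl -mulrA.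
by rewrite rpredD ?rpredM ?rpred_int.
Qed.

Lemma invertible_coprime l d : prime l -> l%:R^-1 \notin R -> invertible d -> coprime d l.
Proof.
move=> l_prime l_notinv /andP[d_gt0 Rd]; rewrite coprime_sym prime_coprime //.
move: l_notinv; apply: contra => /dvdnP[c def_d].
have c_neq0 : c%:R != 0 :> rat.
  by rewrite pnatr_eq0 -lt0n; move: d_gt0; rewrite def_d muln_gt0 => /andP[].
have l_neq0 : l%:R != 0 :> rat by rewrite pnatr_eq0 -lt0n prime_gt0.
have -> : l%:R^-1 = c%:R * d%:R^-1 :> rat by rewrite def_d natrM invfM mulrA mulfV // mul1r.
by rewrite rpredM ?rpred_nat.
Qed.

Lemma in_galg_clear (f : V) : in_galg R f -> exists2 d, invertible d & in_galg ZZ (f *+ d).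
Proof.
move=> Rf; exists (\prod_(g : G) `|denq (f g)|)%N.
  apply: (big_ind invertible); [exact: invertible1 | exact: invertibleM |].
  by move=> g _; apply: invertible_denq.
move=> g; rewrite ffunMnE (bigD1 g) //= mulrnA.
have -> : f g *+ `|denq (f g)|%N = (numq (f g))%:~R.
  by rewrite numqE pmulrn gtz0_abs ?denq_gt0 // mulrzr.
by rewrite rpredMn ?rpred_int.
Qed.

Lemma aug_pow_clear k (x : V) :
  aug_pow R k x -> exists2 d, invertible d & aug_pow ZZ k (x *+ d).
Proof.
elim=> {k x} [f Rf|k x y _ [d Id Ix] [Ry y0]|k|k x y _ [d Id Ix] _ [e Ie Iy]].
- by have [d Id Zf] := in_galg_clear Rf; exists d => //; apply: aug_pow0.
- have [e Ie Zy] := in_galg_clear Ry; exists (d * e)%N; first exact: invertibleM.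
  rewrite mulrnA -gmulMnl -gmulMnr; apply: aug_pow_mul => //.
  by split=> //; rewrite augmMn y0 mul0rn.
- by exists 1%N; [apply: invertible1 | rewrite mulr1n; apply: aug_pow_zero].
- exists (d * e)%N; first exact: invertibleM.
  rewrite mulrnBl; apply: aug_powB; first by rewrite mulrnA; apply: aug_powMn.
  by rewrite mulnC mulrnA; apply: aug_powMn.
Qed.

Lemma aug_pow_divn k (x : V) d : invertible d -> aug_pow R k (x *+ d) -> aug_pow R k x.
Proof.
case/andP=> d_gt0 Rd Ix; have -> : x = gscale d%:R^-1 (x *+ d).
  by rewrite -gscale_nat gscaleA mulVf ?gscale1 // pnatr_eq0 -lt0n.
exact: aug_pow_scale.
Qed.

Variable n : nat.
Hypothesis n_gt0 : (0 < n)%N.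

(* v vanishes in the localization of Q_n(R,G) at l. *)
Definition loc_null (l : nat) (v : V) : Prop :=
  exists2 M, coprime M l & aug_pow R n.+1 (v *+ M).

Lemma loc_null_Qn l (v : V) : aug_pow R n.+1 v -> loc_null l v.
Proof. by exists 1%N; rewrite ?coprime1n ?mulr1n. Qed.

Lemma loc_null_ZZ l (v : V) : aug_pow ZZ n.+1 v -> loc_null l v.
Proof. by move=> Iv; apply/loc_null_Qn/(aug_pow_subset ZZ_subset). Qed.

Lemma loc_nullD l (v w : V) : loc_null l v -> loc_null l w -> loc_null l (v + w).
Proof.
case=> M Ml Iv [M' M'l Iw]; exists (M * M')%N; first by rewrite coprimeMl Ml.
rewrite mulrnDl; apply: aug_powD.
  by rewrite mulrnA; apply: aug_powMn.
by rewrite mulnC mulrnA; apply: aug_powMn.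
Qed.

Lemma loc_nullMz l (v : V) (m : int) : loc_null l v -> loc_null l (v *~ m).
Proof. by case=> M Ml Iv; exists M; rewrite // pmulrn mulrzAC -pmulrn; apply: aug_powMz. Qed.

Lemma loc_nullB l (v w : V) : loc_null l v -> loc_null l w -> loc_null l (v - w).
Proof. by move=> Nv Nw; rewrite -mulrN1z; apply/loc_nullD/loc_nullMz. Qed.

Lemma loc_null_cancel l (v : V) b : coprime b l -> loc_null l (v *+ b) -> loc_null l v.
Proof. by move=> bl [M Ml Iv]; exists (b * M)%N; rewrite ?coprimeMl ?bl // mulrnA. Qed.

Lemma loc_null_Syl_rep l l' (z : V) : prime l -> prime l' -> l' != l ->
  Syl_rep l' n z -> loc_null l z.
Proof.
move=> l_prime l'_prime l'l [_ [k Ik]]; exists (l' ^ k)%N.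
  by apply: coprimeXl; rewrite prime_coprime // dvdn_prime2.
exact: (aug_pow_subset ZZ_subset).
Qed.

Lemma Syl_rep_loc_null l (z : V) : Sprimes G R l ->
  Syl_rep l n z -> loc_null l z -> aug_pow ZZ n.+1 z.
Proof.
case/and3P=> l_prime _ l_notinv [_ [k Ik]] [M Ml Iz].
have [d Id /= Izd] := aug_pow_clear Iz; rewrite -mulrnA in Izd.
have /eqP lMd : coprime (l ^ k) (M * d).
  by rewrite coprimeXl // coprime_sym coprimeMl Ml invertible_coprime.
rewrite -[z]mulr1n -lMd; apply: aug_pow_gcdn => //.
by rewrite expn_gt0 prime_gt0.
Qed.

(* With N = b l^a and b d u = 1 + w l^a (Bezout), z = b d u x is l-torsion in
   Q_n(Z,G) and b (x - z) = - w N x lies in I(R,G)^(n+1). *)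
Lemma exists_Syl_rep_loc l (x : V) : Sprimes G R l -> aug_pow R n x ->
  exists z, Syl_rep l n z /\ loc_null l (x - z).
Proof.
move=> Sl Ix; have /and3P[l_prime _ l_notinv] := Sl.
have [d Id Ixd] := aug_pow_clear Ix; have /andP[d_gt0 _] := Id.
have [b lb defN] := pfactor_coprime l_prime card_zmod_gt0; set a := (l ^ _)%N in defN.
have b_gt0 : (0 < b)%N by move: card_zmod_gt0; rewrite defN muln_gt0 => /andP[].
have /eqP bd_a : coprime (b * d) a.
  by rewrite coprimeMl coprimeXr ?(coprimeXr _ (invertible_coprime _ _ _)) // coprime_sym.
have [u w Euw _] := egcdnP a (leq_mul b_gt0 d_gt0 : (0 < b * d)%N).
rewrite bd_a in Euw; exists (x *+ (u * (b * d))); split; [split|].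
- have -> : (u * (b * d) = d * (u * b))%N by lia.
  by rewrite mulrnA; apply: aug_powMn.
- exists (logn l N); rewrite -/a -mulrnA.
  have -> : (u * (b * d) * a = d * N * u)%N by rewrite defN; lia.
  by rewrite !mulrnA; apply: aug_powMn; apply: aug_pow_card.
- exists b; rewrite 1?coprime_sym //.
  have -> : (x - x *+ (u * (b * d))) *+ b = - (x *+ N *+ w).
    rewrite Euw mulrnDr mulr1n opprD addrCA subrr addr0 mulNrn -!mulrnA defN.
    by congr (- (_ *+ _)); lia.
  by apply: aug_powN; apply: aug_powMn; apply: aug_pow_card.
Qed.

Lemma loc_null_gcdn (v : V) m (s : seq nat) :
  (0 < m)%N -> aug_pow R n.+1 (v *+ m) -> {in s, forall l, loc_null l v} ->
  exists g, [/\ (0 < g)%N, (g %| m)%N, {in s, forall l, coprime g l}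
                & aug_pow R n.+1 (v *+ g)].
Proof.
move=> m_gt0 Ivm; elim: s => [|l s IHs] v_loc; first by exists m.
have [|g [g_gt0 gm gs Ivg]] := IHs; first by move=> l' l's; apply: v_loc; rewrite inE l's orbT.
have [M Ml IvM] := v_loc l (mem_head l s).
exists (gcdn g M); split; first by rewrite gcdn_gt0 g_gt0.
- exact: dvdn_trans (dvdn_gcdl g M) gm.
- move=> l'; rewrite inE => /predU1P[-> | l's]; first exact: coprime_dvdl (dvdn_gcdr g M) Ml.
  exact: coprime_dvdl (dvdn_gcdl g M) (gs l' l's).
- exact: aug_pow_gcdn.
Qed.

Lemma invertible_coprime_Sprimes g : (0 < g)%N -> (g %| N)%N ->
  (forall l, Sprimes G R l -> coprime g l) -> invertible g.
Proof.
move=> g_gt0 gN g_cop; rewrite (prod_prime_decomp g_gt0) prime_decompE big_map big_seq.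
apply: (big_ind invertible); [exact: invertible1 | exact: invertibleM |].
move=> p; rewrite mem_primes => /and3P[p_prime _ pg]; apply: invertibleX.
have : ~~ Sprimes G R p.
  by apply: contraL pg => /g_cop; rewrite coprime_sym prime_coprime.
rewrite /Sprimes p_prime (dvdn_trans pg gN) /= negbK => Rp.
by rewrite /invertible prime_gt0.
Qed.

(* The m with m v in I(R,G)^(n+1) include N and, for each l in S, some m prime to l;
   their gcd divides N and is prime to S, hence invertible in R. *)
Lemma aug_pow_local_global (v : V) : aug_pow R n v ->
  (forall l, Sprimes G R l -> loc_null l v) -> aug_pow R n.+1 v.
Proof.
move=> Iv v_loc; have IvN := aug_pow_card n_gt0 Iv.
have [|g [g_gt0 gN g_cop Ivg]] :=
  loc_null_gcdn (s := [seq l <- primes N | Sprimes G R l]) card_zmod_gt0 IvN.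
  by move=> l; rewrite mem_filter => /andP[/v_loc].
apply: aug_pow_divn Ivg; apply: invertible_coprime_Sprimes g_gt0 gN _ => l Sl.
apply: g_cop; rewrite mem_filter Sl mem_primes card_zmod_gt0.
by case/and3P: Sl => -> ->.
Qed.

Definition lcomp (x : V) (l : nat) : V :=
  epsilon (inhabits 0) (fun z => Syl_rep l n z /\ loc_null l (x - z)).

Lemma lcompP l (x : V) : Sprimes G R l -> aug_pow R n x ->
  Syl_rep l n (lcomp x l) /\ loc_null l (x - lcomp x l).
Proof.
move=> Sl Ix; apply: (epsilon_spec _ (fun z => Syl_rep l n z /\ loc_null l (x - z))).
exact: exists_Syl_rep_loc.
Qed.

Lemma lcomp_uniq l (x z : V) : Sprimes G R l -> aug_pow R n x ->
  Syl_rep l n z -> loc_null l (x - z) -> Qn_eqv ZZ n (lcomp x l) z.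
Proof.
move=> Sl Ix Sz xz; have [Sx xx] := lcompP Sl Ix.
apply: Syl_rep_loc_null Sl (Syl_repB Sx Sz) _.
have -> : lcomp x l - z = (x - z) - (x - lcomp x l) by rewrite opprB [RHS]addrC addrA subrK.
exact: loc_nullB.
Qed.

Lemma lcomp_DS_mem (x : V) : aug_pow R n x -> DS_mem R n (lcomp x).
Proof. by move=> Ix l Sl; case: (lcompP Sl Ix). Qed.

Lemma lcomp_Qn_eqv (x y : V) : aug_pow R n x -> aug_pow R n y ->
  Qn_eqv R n x y <-> DS_eqv R n (lcomp x) (lcomp y).
Proof.
move=> Ix Iy; split=> [Ixy l Sl | xy_loc].
  have [Sy yy] := lcompP Sl Iy; apply: lcomp_uniq => //.
  by rewrite -(subrK y x) -addrA; apply: loc_nullD => //; apply: loc_null_Qn.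
apply: aug_pow_local_global; first exact: aug_powB.
move=> l Sl; have [_ xx] := lcompP Sl Ix; have [_ yy] := lcompP Sl Iy.
have -> : x - y = (x - lcomp x l) + (lcomp x l - lcomp y l) - (y - lcomp y l).
  by rewrite addrA subrK opprB addrA subrK.
by apply: loc_nullB => //; apply: loc_nullD => //; apply: loc_null_ZZ; apply: xy_loc.
Qed.

Lemma lcompD (x y : V) : aug_pow R n x -> aug_pow R n y ->
  DS_eqv R n (lcomp (x + y)) (DS_add (lcomp x) (lcomp y)).
Proof.
move=> Ix Iy l Sl; have [Sx xx] := lcompP Sl Ix; have [Sy yy] := lcompP Sl Iy.
apply: lcomp_uniq => //; first exact: aug_powD.
  exact: Syl_repD.
by rewrite /DS_add opprD addrACA; apply: loc_nullD.
Qed.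

Lemma lcomp_scale r (x : V) : r \in R -> aug_pow R n x ->
  DS_act R n r (lcomp x) (lcomp (gscale r x)).
Proof.
move=> Rr Ix l Sl; have /and3P[l_prime _ l_notinv] := Sl.
have [Sx xx] := lcompP Sl Ix.
have /andP[b_gt0 _] := invertible_denq Rr; set b := `|denq r|%N in b_gt0 *.
have bl : coprime b l by apply: invertible_coprime => //; apply: invertible_denq.
have [w Sw wx] := Syl_rep_divn b_gt0 bl Sx.
exists w; split => //; first by rewrite /Qn_eqv -[denq r]gtz0_abs ?denq_gt0 // -pmulrn.
apply: lcomp_uniq => //; [exact: aug_pow_scale | exact: Syl_repMz |].
apply: (loc_null_cancel bl).
rewrite mulrnBl gscale_denq pmulrn mulrzAC -pmulrn -mulrzBl.
have -> : x - w *+ b = (x - lcomp x l) - (w *+ b - lcomp x l) by rewrite opprB addrA subrK.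
by rewrite mulrzBl; apply: loc_nullB; apply: loc_nullMz => //; apply: loc_null_ZZ.
Qed.

Lemma lcomp_surj (m : nat -> V) : DS_mem R n m ->
  exists2 x, aug_pow R n x & DS_eqv R n (lcomp x) m.
Proof.
move=> Sm; set x := \sum_(l <- primes N | Sprimes G R l) m l.
have Ix : aug_pow R n x.
  apply: (aug_pow_subset ZZ_subset); apply: aug_pow_sum => l Sl.
  by case: (Sm l Sl).
exists x => // l Sl; apply: lcomp_uniq => //; first exact: Sm.
have /and3P[l_prime lN _] := Sl.
have -> : x - m l = \sum_(l' <- primes N | Sprimes G R l' && (l' != l)) m l'.
  rewrite /x -big_filter (bigD1_seq l) /= ?filter_uniq ?primes_uniq //; last first.
    by rewrite mem_filter Sl mem_primes l_prime card_zmod_gt0.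
  by rewrite addrC addrK big_filter_cond.
apply: (big_ind (loc_null l)); [exact/loc_null_Qn/aug_pow_0 | exact: loc_nullD |].
move=> l' /andP[Sl' l'l]; have /and3P[l'_prime _ _] := Sl'.
exact: loc_null_Syl_rep l_prime l'_prime l'l (Sm l' Sl').
Qed.

End Localization.
End GroupAlgebra.

Theorem proposition1p4 (G : finZmodType) (R : {pred rat}) (n : nat) :
  GRing.subring_closed R -> (1 <= n)%N -> Qn_iso_DS G R n.
Proof.
move=> subring_R n_gt0; exists (lcomp R n); split.
- exact: lcomp_DS_mem.
- exact: lcomp_Qn_eqv.
- exact: lcompD.
- exact: lcomp_scale.
- exact: lcomp_surj.
Qed.
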